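(* Let $(X,d)$ be a Hadamard space and let $S,T:\ell^\infty(\mathbb Z^s,X)\to\ell^\infty(\mathbb Z^s,X)$ be maps. Suppose: (i) there are a function $D:\ell^\infty(\mathbb Z^s,X)\to\mathbb R_{\ge0}$, a real $0\le\gamma<1$ and a positive integer $n_0$ with $D(S^nx)\le\gamma^{\lfloor n/n_0\rfloor}D(x)$ for all $x\in\ell^\infty(\mathbb Z^s,X)$ and $n\in\mathbb N$; (ii) $T$ is convergent and $d_\infty(Tx,Ty)\le d_\infty(x,y)$ for all $x,y\in\ell^\infty(\mathbb Z^s,X)$; (iii) there is $C\ge0$ with $d_\infty(Sx,Tx)\le C\,D(x)$ for all $x\in\ell^\infty(\mathbb Z^s,X)$. Then $S$ is convergent.
   Context: Hadamard space: complete metric space $(X,d)$ such that for any $x_0,x_1\in X$ there is $y$ with $d(z,y)^2\le\frac12d(z,x_0)^2+\frac12d(z,x_1)^2-\frac14d(x_0,x_1)^2$ for all $z$. $d_\infty(x,y)=\sup_{j\in\mathbb Z^s}d(x_j,y_j)$. A map $S:\ell^\infty(\mathbb Z^s,X)\to\ell^\infty(\mathbb Z^s,X)$ is convergent if for every $x$ there is a continuous $S^\infty x:\mathbb R^s\to X$ with $\sup_{j}d(S^\infty x(j/2^n),(S^nx)_j)\to0$ as $n\to\infty$. *)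

From Stdlib Require Import Reals Lra ZArith Classical ClassicalEpsilon.
From Stdlib Require Fin.
Open Scope R_scope.

Definition is_metric {X : Type} (d : X -> X -> R) : Prop :=
  (forall x y, 0 <= d x y) /\
  (forall x y, d x y = 0 <-> x = y) /\
  (forall x y, d x y = d y x) /\
  (forall x y z, d x z <= d x y + d y z).

Definition is_complete {X : Type} (d : X -> X -> R) : Prop :=
  forall u : nat -> X,
    (forall eps, eps > 0 -> exists N, forall m n, (m >= N)%nat -> (n >= N)%nat ->
        d (u m) (u n) < eps) ->
    exists l, forall eps, eps > 0 -> exists N, forall n, (n >= N)%nat -> d (u n) l < eps.

(** Hadamard space: complete metric space with the midpoint (CAT(0)) inequality. *)
Definition is_hadamard {X : Type} (d : X -> X -> R) : Prop :=
  is_metric d /\ is_complete d /\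
  forall x0 x1 : X, exists y : X, forall z : X,
    (d z y)^2 <= /2 * (d z x0)^2 + /2 * (d z x1)^2 - /4 * (d x0 x1)^2.

Definition Zs (s : nat) : Type := Fin.t s -> Z.
Definition Rs (s : nat) : Type := Fin.t s -> R.

Definition bounded_seq {X : Type} (d : X -> X -> R) {s : nat} (x : Zs s -> X) : Prop :=
  exists M : R, forall j k : Zs s, d (x j) (x k) <= M.

Definition ell (s : nat) {X : Type} (d : X -> X -> R) : Type :=
  { x : Zs s -> X | bounded_seq d x }.

Definition ev {s : nat} {X : Type} {d : X -> X -> R} (x : ell s d) (j : Zs s) : X :=
  proj1_sig x j.

(** Least upper bound of a set of reals (its value when the lub exists, which is
    always the case for the sets below); defined via classical choice. *)
Definition sup_R (E : R -> Prop) : R := epsilon (inhabits 0) (fun r => is_lub E r).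

Definition d_inf {s : nat} {X : Type} {d : X -> X -> R} (x y : ell s d) : R :=
  sup_R (fun r => exists j : Zs s, r = d (ev x j) (ev y j)).

Definition iterate {A : Type} (S : A -> A) (n : nat) : A -> A :=
  fun a => Nat.iter n S a.

Definition continuous_Rs {s : nat} {X : Type} (d : X -> X -> R) (f : Rs s -> X) : Prop :=
  forall t : Rs s, forall eps, eps > 0 -> exists delta, delta > 0 /\
    forall u : Rs s, (forall i, Rabs (u i - t i) < delta) -> d (f u) (f t) < eps.

Definition grid {s : nat} (n : nat) (j : Zs s) : Rs s := fun i => IZR (j i) / 2 ^ n.

Definition convergent {s : nat} {X : Type} {d : X -> X -> R} (S : ell s d -> ell s d) : Prop :=
  forall x : ell s d, exists f : Rs s -> X,
    continuous_Rs d f /\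
    forall eps, eps > 0 -> exists N : nat, forall n : nat, (n >= N)%nat ->
      forall j : Zs s, d (f (grid n j)) (ev (iterate S n x) j) <= eps.

(** Let x be a starting sequence.  Since T is nonexpansive for d_inf and
    d_inf(S y, T y) <= C D(y), a telescoping argument gives
        d_inf (S^k y, T^k y) <= C * sum_{i<k} D(S^i y).
    Taking y = S^m x, the decay D(S^n x) <= gamma^(n/n0) D(x) bounds the right
    hand side, uniformly in k, by B_m = C D(x) n0/(1-gamma) gamma^(m/n0), and
    B_m -> 0.  If F is the limit function of T started at S^m x, the rescaled
    function g_m(t) = F(2^m t) therefore approximates S^(k+m) x on the grid of
    level k+m up to B_m + o(1) as k -> oo.  Two continuous functions that are
    close on all fine dyadic grids are close everywhere, so the g_m form a
    uniformly Cauchy sequence of continuous functions; by completeness of X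
    they converge uniformly to a continuous limit, which is the limit
    function of S. *)

From Stdlib Require Import Reals Lra Lia ZArith ClassicalEpsilon FunctionalExtensionality.
Open Scope R_scope.

Fixpoint sumR (f : nat -> R) (k : nat) : R :=
  match k with O => 0 | S k => sumR f k + f k end.

Lemma sumR_le (f g : nat -> R) (k : nat) :
  (forall i, (i < k)%nat -> f i <= g i) -> sumR f k <= sumR g k.
Proof.
  induction k as [|k IH]; simpl; intros H; [lra|].
  pose proof (H k ltac:(lia)).
  assert (sumR f k <= sumR g k) by (apply IH; intros; apply H; lia).
  lra.
Qed.

Lemma sumR_ext (f g : nat -> R) (k : nat) :
  (forall i, (i < k)%nat -> f i = g i) -> sumR f k = sumR g k.
Proof.
  induction k as [|k IH]; simpl; intros H; [reflexivity|].
  rewrite (H k ltac:(lia)), IH; auto.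
Qed.

Lemma sumR_mono (f : nat -> R) (k k' : nat) :
  (forall i, 0 <= f i) -> (k <= k')%nat -> sumR f k <= sumR f k'.
Proof. intros Hf Hk. induction Hk; simpl; [lra|]. pose proof (Hf m). lra. Qed.

Lemma sumR_scal (c : R) (f : nat -> R) (k : nat) :
  sumR (fun i => c * f i) k = c * sumR f k.
Proof. induction k; simpl; [ring|]. rewrite IHk. ring. Qed.

Lemma sumR_const (c : R) (k : nat) : sumR (fun _ => c) k = INR k * c.
Proof. induction k; simpl sumR; [simpl; ring|]. rewrite IHk, S_INR. ring. Qed.

Lemma sumR_add (f : nat -> R) (a b : nat) :
  sumR f (a + b) = sumR f a + sumR (fun r => f (a + r)%nat) b.
Proof.
  induction b; simpl; [rewrite Nat.add_0_r; ring|].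
  rewrite Nat.add_succ_r; simpl. rewrite IHb. ring.
Qed.

Lemma sumR_geometric (g : R) (q : nat) : sumR (pow g) q * (1 - g) = 1 - g ^ q.
Proof.
  induction q; simpl sumR; [simpl; ring|].
  simpl pow. rewrite Rmult_plus_distr_r, IHq. ring.
Qed.

Lemma pow_le_anti (g : R) (a b : nat) : 0 <= g <= 1 -> (b <= a)%nat -> g ^ a <= g ^ b.
Proof.
  intros Hg Hab. replace a with (b + (a - b))%nat by lia. rewrite pow_add.
  assert (0 <= g ^ b) by (apply pow_le; lra).
  assert (g ^ (a - b) <= 1).
  { replace 1 with (1 ^ (a - b)) by apply pow1. apply pow_incr; lra. }
  nra.
Qed.

Lemma sumR_blocks (g : R) (n0 q : nat) : (0 < n0)%nat ->
  sumR (fun i => g ^ (i / n0)) (q * n0) = INR n0 * sumR (pow g) q.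
Proof.
  intros Hn. induction q; [simpl; ring|].
  replace (S q * n0)%nat with (q * n0 + n0)%nat by lia.
  rewrite sumR_add, IHq.
  rewrite (sumR_ext (fun r => g ^ ((q * n0 + r) / n0)) (fun _ => g ^ q) n0).
  - rewrite sumR_const. simpl sumR. ring.
  - intros i Hi. f_equal.
    replace (q * n0 + i)%nat with (i + q * n0)%nat by lia.
    rewrite Nat.div_add, Nat.div_small; lia.
Qed.

Lemma div_superadditive (i m n0 : nat) : (0 < n0)%nat -> (i / n0 + m / n0 <= (i + m) / n0)%nat.
Proof.
  intros Hn. pose proof (Nat.div_mod_eq i n0).
  replace (i + m)%nat with ((i mod n0 + m) + (i / n0) * n0)%nat by lia.
  rewrite Nat.div_add by lia.
  pose proof (Nat.Div0.div_le_mono m (i mod n0 + m) n0 ltac:(lia)). lia.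
Qed.

Lemma block_geometric_tail (g : R) (n0 m k : nat) : 0 <= g < 1 -> (0 < n0)%nat ->
  sumR (fun i => g ^ ((i + m) / n0)) k <= g ^ (m / n0) * (INR n0 / (1 - g)).
Proof.
  intros Hg Hn.
  apply Rle_trans with (sumR (fun i => g ^ (m / n0) * g ^ (i / n0)) k).
  { apply sumR_le. intros i _. rewrite <- pow_add. apply pow_le_anti; [lra|].
    pose proof (div_superadditive i m n0 Hn). lia. }
  rewrite sumR_scal. apply Rmult_le_compat_l; [apply pow_le; lra|].
  apply Rle_trans with (sumR (fun i => g ^ (i / n0)) (k * n0)).
  { apply sumR_mono; [intros; apply pow_le; lra | nia]. }
  rewrite sumR_blocks by exact Hn. unfold Rdiv.
  apply Rmult_le_compat_l; [apply pos_INR|].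
  pose proof (sumR_geometric g k). assert (0 <= g ^ k) by (apply pow_le; lra).
  apply Rmult_le_reg_r with (1 - g); [lra|].
  rewrite Rinv_l by lra. lra.
Qed.

Definition vanishing (B : nat -> R) : Prop :=
  forall e, e > 0 -> exists M, forall m, (m >= M)%nat -> B m <= e.

Lemma block_power_vanishing (K g : R) (n0 : nat) : 0 <= K -> 0 <= g < 1 -> (0 < n0)%nat ->
  vanishing (fun m => K * g ^ (m / n0)).
Proof.
  intros HK Hg Hn e He.
  destruct (pow_lt_1_zero g ltac:(rewrite Rabs_pos_eq; lra) (e / (K + 1)))
    as [Q HQ]; [apply Rdiv_lt_0_compat; lra|].
  exists (Q * n0)%nat. intros m Hmm.
  assert (Hq : (m / n0 >= Q)%nat).
  { pose proof (Nat.Div0.div_le_mono _ _ n0 Hmm). rewrite Nat.div_mul in H by lia. lia. }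
  specialize (HQ _ Hq). rewrite Rabs_pos_eq in HQ by (apply pow_le; lra).
  assert (K * g ^ (m / n0) <= K * (e / (K + 1))) by (apply Rmult_le_compat_l; lra).
  assert (K * (e / (K + 1)) <= e).
  { unfold Rdiv. apply Rmult_le_reg_r with (K + 1); [lra|].
    rewrite Rmult_assoc, Rmult_assoc, Rinv_l by lra. nra. }
  lra.
Qed.

Lemma grid_dense (s : nat) (t : Rs s) (delta : R) (N : nat) : delta > 0 ->
  exists n, (n >= N)%nat /\ exists j : Zs s, forall i, Rabs (grid n j i - t i) < delta.
Proof.
  intros Hd.
  destruct (pow_lt_1_zero (/2) ltac:(rewrite Rabs_pos_eq; lra) delta Hd) as [N1 HN1].
  set (n := Nat.max N N1). exists n. split; [lia|].
  assert (Hp : 0 < 2 ^ n) by (apply pow_lt; lra).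
  assert (Hmesh : / 2 ^ n < delta).
  { specialize (HN1 n ltac:(lia)). rewrite <- pow_inv.
    rewrite Rabs_pos_eq in HN1; [lra | apply pow_le; lra]. }
  exists (fun i => (up (t i * 2 ^ n) - 1)%Z). intros i. unfold grid.
  destruct (archimed (t i * 2 ^ n)) as [H1 H2]. rewrite minus_IZR.
  set (u := IZR (up (t i * 2 ^ n))) in *.
  replace ((u - 1) / 2 ^ n - t i) with ((u - 1 - t i * 2 ^ n) * / 2 ^ n) by (field; lra).
  assert (Hinv : 0 < / 2 ^ n) by (apply Rinv_0_lt_compat; lra).
  rewrite Rabs_mult, (Rabs_pos_eq (/ 2 ^ n)) by lra.
  assert (Rabs (u - 1 - t i * 2 ^ n) <= 1) by (apply Rabs_le; lra).
  nra.
Qed.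

Lemma grid_dilate (s k m : nat) (j : Zs s) :
  (fun i => 2 ^ m * grid (k + m) j i) = grid k j.
Proof.
  apply functional_extensionality. intros i. unfold grid. rewrite pow_add.
  field. split; apply pow_nonzero; lra.
Qed.

Section MetricSpace.

Variables (X : Type) (d : X -> X -> R).
Hypothesis Hm : is_metric d.

Lemma dist_self (x : X) : d x x = 0.
Proof. apply (proj1 (proj2 Hm)). reflexivity. Qed.

Lemma dist_sym (x y : X) : d x y = d y x.
Proof. apply Hm. Qed.

Lemma dist_triangle (x y z : X) : d x z <= d x y + d y z.
Proof. apply Hm. Qed.

Variable s : nat.

(** [d_inf x y] really is the supremum of the coordinate distances: the set
    of these distances is bounded because [x] and [y] are bounded. *)
Lemma d_inf_is_lub (x y : ell s d) :
  is_lub (fun r => exists j : Zs s, r = d (ev x j) (ev y j)) (d_inf x y).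
Proof.
  unfold d_inf, sup_R. apply epsilon_spec.
  destruct x as [x [Mx HMx]], y as [y [My HMy]]. unfold ev; simpl.
  set (j0 := (fun _ : Fin.t s => 0%Z) : Zs s).
  destruct (completeness (fun r => exists j : Zs s, r = d (x j) (y j))) as [l Hl].
  - exists (Mx + d (x j0) (y j0) + My). intros r [j ->].
    pose proof (dist_triangle (x j) (x j0) (y j)).
    pose proof (dist_triangle (x j0) (y j0) (y j)).
    pose proof (HMx j j0). pose proof (HMy j0 j). lra.
  - exists (d (x j0) (y j0)), j0. reflexivity.
  - exists l. exact Hl.
Qed.

Lemma d_inf_ge (x y : ell s d) (j : Zs s) : d (ev x j) (ev y j) <= d_inf x y.
Proof. apply (proj1 (d_inf_is_lub x y)). exists j. reflexivity. Qed.

Lemma d_inf_le (x y : ell s d) (B : R) :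
  (forall j, d (ev x j) (ev y j) <= B) -> d_inf x y <= B.
Proof. intros H. apply (proj2 (d_inf_is_lub x y)). intros r [j ->]. apply H. Qed.

Lemma d_inf_self (x : ell s d) : d_inf x x <= 0.
Proof. apply d_inf_le. intros j. rewrite dist_self. lra. Qed.

Lemma d_inf_triangle (x y z : ell s d) : d_inf x z <= d_inf x y + d_inf y z.
Proof.
  apply d_inf_le. intros j.
  pose proof (dist_triangle (ev x j) (ev y j) (ev z j)).
  pose proof (d_inf_ge x y j). pose proof (d_inf_ge y z j). lra.
Qed.

Lemma close_on_grids (f g : Rs s -> X) (B : R) (N : nat) :
  continuous_Rs d f -> continuous_Rs d g ->
  (forall n, (n >= N)%nat -> forall j, d (f (grid n j)) (g (grid n j)) <= B) ->
  forall t, d (f t) (g t) <= B.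
Proof.
  intros Hf Hg H t. apply le_epsilon. intros e He.
  destruct (Hf t (e/2) ltac:(lra)) as [d1 [Hd1 H1]].
  destruct (Hg t (e/2) ltac:(lra)) as [d2 [Hd2 H2]].
  destruct (grid_dense s t (Rmin d1 d2) N) as [n [Hn [j Hj]]];
    [apply Rmin_glb_lt; lra|].
  assert (Hfj : d (f (grid n j)) (f t) < e/2).
  { apply H1. intros i. specialize (Hj i). pose proof (Rmin_l d1 d2). lra. }
  assert (Hgj : d (g (grid n j)) (g t) < e/2).
  { apply H2. intros i. specialize (Hj i). pose proof (Rmin_r d1 d2). lra. }
  specialize (H n Hn j).
  pose proof (dist_triangle (f t) (f (grid n j)) (g t)).
  pose proof (dist_triangle (f (grid n j)) (g (grid n j)) (g t)).
  rewrite (dist_sym (f t) (f (grid n j))) in *. lra.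
Qed.

Lemma continuous_dilate (F : Rs s -> X) (m : nat) :
  continuous_Rs d F -> continuous_Rs d (fun t => F (fun i => 2 ^ m * t i)).
Proof.
  intros HF t e He.
  destruct (HF (fun i => 2 ^ m * t i) e He) as [dl [Hdl H]].
  assert (Hp2 : 0 < 2 ^ m) by (apply pow_lt; lra).
  exists (dl / 2 ^ m). split; [apply Rdiv_lt_0_compat; lra|].
  intros u Hu. apply H. intros i. specialize (Hu i).
  rewrite <- Rmult_minus_distr_l, Rabs_mult, (Rabs_pos_eq (2 ^ m)) by lra.
  apply Rmult_lt_compat_l with (r := 2 ^ m) in Hu; [|lra].
  replace (2 ^ m * (dl / 2 ^ m)) with dl in Hu by (field; lra). lra.
Qed.

Definition unif_cauchy {A : Type} (g : nat -> A -> X) : Prop :=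
  forall e, e > 0 -> exists M, forall m m', (m >= M)%nat -> (m' >= M)%nat ->
    forall t, d (g m t) (g m' t) <= e.

Definition unif_conv {A : Type} (g : nat -> A -> X) (f : A -> X) : Prop :=
  forall e, e > 0 -> exists M, forall m, (m >= M)%nat -> forall t, d (g m t) (f t) <= e.

Lemma unif_cauchy_conv (Hc : is_complete d) (A : Type) (g : nat -> A -> X) :
  unif_cauchy g -> exists f, unif_conv g f.
Proof.
  intros Hg.
  assert (Hlim : forall t, exists l, forall e, e > 0 ->
            exists N, forall n, (n >= N)%nat -> d (g n t) l < e).
  { intros t. apply (Hc (fun m => g m t)). intros e He.
    destruct (Hg (e/2) ltac:(lra)) as [M HM]. exists M. intros m n Hm1 Hn1.
    specialize (HM m n Hm1 Hn1 t). lra. }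
  destruct (choice _ Hlim) as [f Hf]. exists f. intros e He.
  destruct (Hg (e/2) ltac:(lra)) as [M HM]. exists M. intros m Hm1 t.
  destruct (Hf t (e/2) ltac:(lra)) as [N HN].
  specialize (HN (Nat.max m N) ltac:(lia)).
  specialize (HM m (Nat.max m N) Hm1 ltac:(lia) t).
  pose proof (dist_triangle (g m t) (g (Nat.max m N) t) (f t)). lra.
Qed.

Lemma unif_conv_continuous (g : nat -> Rs s -> X) (f : Rs s -> X) :
  (forall m, continuous_Rs d (g m)) -> unif_conv g f -> continuous_Rs d f.
Proof.
  intros Hg Hgf t e He.
  destruct (Hgf (e/4) ltac:(lra)) as [M HM].
  destruct (Hg M t (e/4) ltac:(lra)) as [dl [Hdl H]]. exists dl. split; [exact Hdl|].
  intros u Hu. specialize (H u Hu).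
  pose proof (HM M (le_n _) u). pose proof (HM M (le_n _) t).
  pose proof (dist_triangle (f u) (g M u) (f t)).
  pose proof (dist_triangle (g M u) (g M t) (f t)).
  rewrite (dist_sym (f u) (g M u)) in *. lra.
Qed.

Definition grid_approximates (S : ell s d -> ell s d) (x : ell s d)
    (g : nat -> Rs s -> X) (B : nat -> R) : Prop :=
  forall m e, e > 0 -> exists N, forall k, (k >= N)%nat -> forall j,
    d (g m (grid (k + m) j)) (ev (iterate S (k + m) x) j) <= e + B m.

(** Continuous grid approximations with vanishing errors are uniformly Cauchy:
    both [g_m] and [g_m'] are close to [S^n x] on the fine grids. *)
Lemma grid_approximations_cauchy (S : ell s d -> ell s d) (x : ell s d)
    (g : nat -> Rs s -> X) (B : nat -> R) :
  (forall m, continuous_Rs d (g m)) -> vanishing B -> grid_approximates S x g B ->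
  unif_cauchy g.
Proof.
  intros Hcont HB Happ e He.
  destruct (HB (e/4) ltac:(lra)) as [M HM]. exists M. intros m m' Hm1 Hm2.
  destruct (Happ m (e/4) ltac:(lra)) as [N1 HN1].
  destruct (Happ m' (e/4) ltac:(lra)) as [N2 HN2].
  apply (close_on_grids (g m) (g m') e (N1 + N2 + m + m')); auto.
  intros n Hn j.
  specialize (HN1 (n - m)%nat ltac:(lia) j). specialize (HN2 (n - m')%nat ltac:(lia) j).
  rewrite Nat.sub_add in HN1, HN2 by lia.
  pose proof (HM m Hm1). pose proof (HM m' Hm2).
  pose proof (dist_triangle (g m (grid n j)) (ev (iterate S n x) j) (g m' (grid n j))).
  rewrite (dist_sym (ev (iterate S n x) j) (g m' (grid n j))) in *. lra.
Qed.

Lemma convergent_of_grid_approximations (Hc : is_complete d) (S : ell s d -> ell s d) :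
  (forall x, exists (g : nat -> Rs s -> X) (B : nat -> R),
     (forall m, continuous_Rs d (g m)) /\ vanishing B /\ grid_approximates S x g B) ->
  convergent S.
Proof.
  intros H x. destruct (H x) as [g [B [Hcont [HB Happ]]]].
  destruct (unif_cauchy_conv Hc _ g (grid_approximations_cauchy S x g B Hcont HB Happ))
    as [f Hgf].
  exists f. split; [exact (unif_conv_continuous g f Hcont Hgf)|].
  intros e He.
  destruct (Hgf (e/3) ltac:(lra)) as [M1 HM1].
  destruct (HB (e/3) ltac:(lra)) as [M2 HM2].
  set (m := Nat.max M1 M2).
  destruct (Happ m (e/3) ltac:(lra)) as [N HN].
  exists (N + m)%nat. intros n Hn j.
  specialize (HN (n - m)%nat ltac:(lia) j). rewrite Nat.sub_add in HN by lia.
  specialize (HM1 m ltac:(lia) (grid n j)). specialize (HM2 m ltac:(lia)).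
  pose proof (dist_triangle (f (grid n j)) (g m (grid n j)) (ev (iterate S n x) j)).
  rewrite (dist_sym (f (grid n j)) (g m (grid n j))) in *. lra.
Qed.

Section Perturbation.

Variables (S T : ell s d -> ell s d) (D : ell s d -> R) (C : R).
Hypothesis T_nonexpansive : forall x y, d_inf (T x) (T y) <= d_inf x y.
Hypothesis S_close_to_T : forall x, d_inf (S x) (T x) <= C * D x.

(** Telescoping: the iterates of [S] and [T] stay within the accumulated
    one-step errors of each other. *)
Lemma iterate_gap (k : nat) (y : ell s d) :
  d_inf (iterate S k y) (iterate T k y) <= C * sumR (fun i => D (iterate S i y)) k.
Proof.
  induction k as [|k IH]; simpl sumR.
  - pose proof (d_inf_self y). simpl. lra.
  - change (iterate S (Datatypes.S k) y) with (S (iterate S k y)).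
    change (iterate T (Datatypes.S k) y) with (T (iterate T k y)).
    pose proof (d_inf_triangle (S (iterate S k y)) (T (iterate S k y)) (T (iterate T k y))).
    pose proof (S_close_to_T (iterate S k y)).
    pose proof (T_nonexpansive (iterate S k y) (iterate T k y)). lra.
Qed.

Variables (gamma : R) (n0 : nat).
Hypothesis gamma_range : 0 <= gamma < 1.
Hypothesis n0_pos : (0 < n0)%nat.
Hypothesis D_nonneg : forall x, 0 <= D x.
Hypothesis C_nonneg : 0 <= C.
Hypothesis D_decay : forall x n, D (iterate S n x) <= gamma ^ (n / n0) * D x.

Lemma shifted_gap (k m : nat) (x : ell s d) :
  d_inf (iterate S (k + m) x) (iterate T k (iterate S m x))
    <= C * D x * (INR n0 / (1 - gamma)) * gamma ^ (m / n0).
Proof.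
  assert (Hshift : forall i, iterate S (i + m) x = iterate S i (iterate S m x))
    by (intros i; apply Nat.iter_add).
  rewrite Hshift. eapply Rle_trans; [apply iterate_gap|].
  replace (C * D x * (INR n0 / (1 - gamma)) * gamma ^ (m / n0))
    with (C * (D x * (gamma ^ (m / n0) * (INR n0 / (1 - gamma))))) by ring.
  apply Rmult_le_compat_l; [exact C_nonneg|].
  apply Rle_trans with (sumR (fun i => D x * gamma ^ ((i + m) / n0)) k).
  - apply sumR_le. intros i _. rewrite <- Hshift.
    pose proof (D_decay x (i + m)). lra.
  - rewrite sumR_scal. apply Rmult_le_compat_l; [apply D_nonneg|].
    apply block_geometric_tail; auto.
Qed.

Lemma dilated_limits_approximate (F : ell s d -> Rs s -> X) (x : ell s d) :
  (forall y e, e > 0 -> exists N, forall n, (n >= N)%nat ->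
     forall j, d (F y (grid n j)) (ev (iterate T n y) j) <= e) ->
  grid_approximates S x (fun m t => F (iterate S m x) (fun i => 2 ^ m * t i))
    (fun m => C * D x * (INR n0 / (1 - gamma)) * gamma ^ (m / n0)).
Proof.
  intros HF m e He. set (y := iterate S m x).
  destruct (HF y e He) as [N HN].
  exists N. intros k Hk j. cbv beta. rewrite grid_dilate.
  pose proof (HN k Hk j).
  pose proof (d_inf_ge (iterate S (k + m) x) (iterate T k y) j).
  pose proof (shifted_gap k m x) as Hgap; fold y in Hgap.
  pose proof (dist_triangle (F y (grid k j))
                (ev (iterate T k y) j) (ev (iterate S (k + m) x) j)).
  rewrite (dist_sym (ev (iterate S (k + m) x) j) (ev (iterate T k y) j)) in *.
  lra.
Qed.

End Perturbation.

End MetricSpace.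

Theorem mainTheorem4 (s : nat) (X : Type) (d : X -> X -> R) (HX : is_hadamard d)
  (S T : ell s d -> ell s d)
  (D : ell s d -> R) (HD0 : forall x, 0 <= D x)
  (gamma : R) (n0 : nat) (Hg0 : 0 <= gamma) (Hg1 : gamma < 1) (Hn0 : (0 < n0)%nat)
  (HDS : forall (x : ell s d) (n : nat), D (iterate S n x) <= gamma ^ (n / n0) * D x)
  (HTconv : convergent T)
  (HTnonexp : forall x y : ell s d, d_inf (T x) (T y) <= d_inf x y)
  (C : R) (HC0 : 0 <= C)
  (HST : forall x : ell s d, d_inf (S x) (T x) <= C * D x) :
  convergent S.
Proof.
  destruct HX as [Hm [Hc _]].
  destruct (choice _ HTconv) as [F HF].
  apply (convergent_of_grid_approximations X d Hm s Hc S). intros x.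
  set (K := C * D x * (INR n0 / (1 - gamma))).
  assert (HK : 0 <= K).
  { unfold K, Rdiv. pose proof (HD0 x). pose proof (pos_INR n0).
    assert (0 < / (1 - gamma)) by (apply Rinv_0_lt_compat; lra).
    apply Rmult_le_pos; apply Rmult_le_pos; lra. }
  exists (fun m t => F (iterate S m x) (fun i => 2 ^ m * t i)),
         (fun m => K * gamma ^ (m / n0)).
  split; [|split].
  - intros m. apply continuous_dilate, HF.
  - apply block_power_vanishing; auto.
  - apply (dilated_limits_approximate X d Hm s S T D C HTnonexp HST gamma n0
             (conj Hg0 Hg1) Hn0 HD0 HC0 HDS F x).
    intros y. exact (proj2 (HF y)).
Qed.
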